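(* For a Cartesian left additive category $\mathbb{X}$, the category $\mathcal{D}[\mathbb{X}]$ of $\mathsf{D}$-sequences (a subcategory of the category of pre-$\mathsf{D}$-sequences of $\mathbb{X}$, with the same identities, composition, pointwise finite product structure and pointwise additive structure) is a well-defined Cartesian left additive category.
   Context: Composition in diagrammatic order. A Cartesian left additive category is a category with finite products whose hom-sets are commutative monoids with $f(g+h)=fg+fh$, $f0=0$, in which all projections $\pi_j$ are additive ($(f+g)\pi_j=f\pi_j+g\pi_j$, $0\pi_j=0$). Let $\mathsf{P}(A)=A\times A$, $\mathsf{P}(f)=f\times f$. A pre-$\mathsf{D}$-sequence $f_\bullet:A\to B$ is $(f_0,f_1,\dots)$ with $f_n:\mathsf{P}^n(A)\to B$; $(h\cdot f_\bullet)_n=\mathsf{P}^n(h)f_n$; $\mathsf{T}(f_\bullet):\mathsf{P}(A)\to\mathsf{P}(B)$, $\mathsf{T}(f_\bullet)_n=\langle\mathsf{P}^n(\pi_0)f_n,f_{n+1}\rangle$; $\mathsf{D}[f_\bullet]:\mathsf{P}(A)\to B$, $\mathsf{D}[f_\bullet]_n=f_{n+1}$. Identity $i_\bullet$: $i_0=1$, $i_n=\pi_1\cdots\pi_1$ ($n$ times). Composition $(f_\bullet\ast g_\bullet)_n=\mathsf{T}^n(f_\bullet)_0g_n$. Products: terminal object of $\mathbb{X}$, projections $i_\bullet\cdot\pi_j$ where $(i_\bullet\cdot\pi_j)_n=i_n\pi_j$, pairing $\langle f_\bullet,g_\bullet\rangle_n=\langle f_n,g_n\rangle$. Addition: $0_n=0$,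 $(f_\bullet+g_\bullet)_n=f_n+g_n$. A $\mathsf{D}$-sequence is a pre-$\mathsf{D}$-sequence such that for all $n$, with $C=\mathsf{P}^n(A)$: $\langle1,0\rangle\cdot\mathsf{D}^{n+1}[f_\bullet]=0_\bullet$ ($\langle1,0\rangle:C\to C\times C$); $(1\times(\pi_0+\pi_1))\cdot\mathsf{D}^{n+1}[f_\bullet]=(1\times\pi_0)\cdot\mathsf{D}^{n+1}[f_\bullet]+(1\times\pi_1)\cdot\mathsf{D}^{n+1}[f_\bullet]$ (maps $C\times(C\times C)\to C\times C$); $\ell\cdot\mathsf{D}^{n+2}[f_\bullet]=\mathsf{D}^{n+1}[f_\bullet]$ with $\ell=\langle1,0\rangle\times\langle0,1\rangle:C\times C\to(C\times C)\times(C\times C)$; $c\cdot\mathsf{D}^{n+2}[f_\bullet]=\mathsf{D}^{n+2}[f_\bullet]$ with $c=\langle\langle\pi_0\pi_0,\pi_1\pi_0\rangle,\langle\pi_0\pi_1,\pi_1\pi_1\rangle\rangle$ on $(C\times C)\times(C\times C)$. *)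

(* Plain Rocq (no library needed).  Composition is written in DIAGRAMMATIC
   order: [comp o f g] means "first f, then g" (the paper's  f g). *)

Set Implicit Arguments.
Unset Strict Implicit.

(* structure on hom-sets.  The terminal object [top] and the binary    *)
(* product objects [prod A B] are parameters (so that D[X] can reuse   *)
(* those of X on the nose).                                            *)
Record CLACops (Ob : Type) (Hom : Ob -> Ob -> Type) (top : Ob)
    (prod : Ob -> Ob -> Ob) := {
  idm  : forall A, Hom A A;
  comp : forall A B C, Hom A B -> Hom B C -> Hom A C;
  p0   : forall A B, Hom (prod A B) A;
  p1   : forall A B, Hom (prod A B) B;
  pair : forall C A B, Hom C A -> Hom C B -> Hom C (prod A B);
  zero : forall A B, Hom A B;
  plus : forall A B, Hom A B -> Hom A B -> Hom A B }.

Arguments idm  {Ob Hom top prod} o A : rename.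
Arguments comp {Ob Hom top prod} o {A B C} f g : rename.
Arguments p0   {Ob Hom top prod} o {A B} : rename.
Arguments p1   {Ob Hom top prod} o {A B} : rename.
Arguments pair {Ob Hom top prod} o {C A B} f g : rename.
Arguments zero {Ob Hom top prod} o {A B} : rename.
Arguments plus {Ob Hom top prod} o {A B} f g : rename.

Record CLAClaws {Ob : Type} {Hom : Ob -> Ob -> Type} {top : Ob}
    {prod : Ob -> Ob -> Ob} (o : CLACops Hom top prod) : Prop := {
  law_id_l : forall A B (f : Hom A B), comp o (idm o A) f = f;
  law_id_r : forall A B (f : Hom A B), comp o f (idm o B) = f;
  law_assoc : forall A B C D (f : Hom A B) (g : Hom B C) (h : Hom C D),
      comp o (comp o f g) h = comp o f (comp o g h);
  law_top_ex : forall A, inhabited (Hom A top);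
  law_top_uniq : forall A (f g : Hom A top), f = g;
  law_pair_p0 : forall C A B (f : Hom C A) (g : Hom C B),
      comp o (pair o f g) (p0 o) = f;
  law_pair_p1 : forall C A B (f : Hom C A) (g : Hom C B),
      comp o (pair o f g) (p1 o) = g;
  law_pair_uniq : forall C A B (h : Hom C (prod A B)),
      h = pair o (comp o h (p0 o)) (comp o h (p1 o));
  law_plus_assoc : forall A B (f g h : Hom A B),
      plus o (plus o f g) h = plus o f (plus o g h);
  law_plus_comm : forall A B (f g : Hom A B), plus o f g = plus o g f;
  law_plus_zero : forall A B (f : Hom A B), plus o f (zero o) = f;
  law_left_add : forall A B C (f : Hom A B) (g h : Hom B C),
      comp o f (plus o g h) = plus o (comp o f g) (comp o f h);
  law_left_zero : forall A B C (f : Hom A B),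
      comp o f (zero o) = (zero o : Hom A C);
  law_p0_add : forall C A B (f g : Hom C (prod A B)),
      comp o (plus o f g) (p0 o) = plus o (comp o f (p0 o)) (comp o g (p0 o));
  law_p0_zero : forall C A B,
      comp o (zero o : Hom C (prod A B)) (p0 o) = zero o;
  law_p1_add : forall C A B (f g : Hom C (prod A B)),
      comp o (plus o f g) (p1 o) = plus o (comp o f (p1 o)) (comp o g (p1 o));
  law_p1_zero : forall C A B,
      comp o (zero o : Hom C (prod A B)) (p1 o) = zero o }.

Section PreD.
Context {Ob : Type} {Hom : Ob -> Ob -> Type} {top : Ob}
  {prod : Ob -> Ob -> Ob} (o : CLACops Hom top prod).

Definition tensor {A B C D} (f : Hom A B) (g : Hom C D)
  : Hom (prod A C) (prod B D) :=
  pair o (comp o (p0 o) f) (comp o (p1 o) g).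

Definition PO (A : Ob) : Ob := prod A A.
Definition Ph {A B} (f : Hom A B) : Hom (PO A) (PO B) := tensor f f.

Fixpoint Pn (n : nat) (A : Ob) : Ob :=
  match n with 0 => A | S m => Pn m (PO A) end.
Fixpoint Pnh (n : nat) {A B} (h : Hom A B) : Hom (Pn n A) (Pn n B) :=
  match n with 0 => h | S m => Pnh m (Ph h) end.
(* P^n, iterated "outside": P^{n+1}(A) = P(P^n(A)) (same object, by
   induction; used where the paper writes C = P^n(A) and P(C)). *)
Fixpoint PnO (n : nat) (A : Ob) : Ob :=
  match n with 0 => A | S m => PO (PnO m A) end.

Definition preD (A B : Ob) : Type := forall n : nat, Hom (Pn n A) B.

Definition act {A' A B} (h : Hom A' A) (f : preD A B) : preD A' B :=
  fun n => comp o (Pnh n h) (f n).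

Definition Tseq {A B} (f : preD A B) : preD (PO A) (PO B) :=
  fun n => pair o (comp o (Pnh n (p0 o)) (f n)) (f (S n)).

Definition Dseq {A B} (f : preD A B) : preD (PO A) B := fun n => f (S n).

Fixpoint Tn (n : nat) {A B} (f : preD A B) : preD (Pn n A) (Pn n B) :=
  match n with 0 => f | S m => Tn m (Tseq f) end.

Fixpoint Dn (n : nat) {A B} (f : preD A B) : preD (PnO n A) B :=
  match n with 0 => f | S m => Dseq (Dn m f) end.

Fixpoint iseq (n : nat) (A : Ob) : Hom (Pn n A) A :=
  match n with 0 => idm o A | S m => comp o (iseq m (PO A)) (p1 o) end.
Definition idseq (A : Ob) : preD A A := fun n => iseq n A.

Definition dcomp {A B C} (f : preD A B) (g : preD B C) : preD A C :=
  fun n => comp o (Tn n f 0) (g n).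

Definition proj0seq (A B : Ob) : preD (prod A B) A :=
  fun n => comp o (iseq n (prod A B)) (p0 o).
Definition proj1seq (A B : Ob) : preD (prod A B) B :=
  fun n => comp o (iseq n (prod A B)) (p1 o).
Definition pairseq {C A B} (f : preD C A) (g : preD C B) : preD C (prod A B) :=
  fun n => pair o (f n) (g n).
Definition zeroseq {A B} : preD A B := fun n => zero o.
Definition plusseq {A B} (f g : preD A B) : preD A B :=
  fun n => plus o (f n) (g n).

Definition isDseq {A B} (f : preD A B) : Prop :=
  forall n : nat,
    let C := PnO n A in
    act (pair o (idm o C) (zero o)) (Dn (S n) f) = zeroseq
 /\ act (tensor (idm o C) (plus o (p0 o) (p1 o))) (Dn (S n) f)
    = plusseq (act (tensor (idm o C) (p0 o)) (Dn (S n) f))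
              (act (tensor (idm o C) (p1 o)) (Dn (S n) f))
 /\ act (tensor (pair o (idm o C) (zero o)) (pair o (zero o) (idm o C)))
        (Dn (S (S n)) f) = Dn (S n) f
 /\ act (pair o (pair o (comp o (p0 o) (p0 o)) (comp o (p1 o) (p0 o)))
                (pair o (comp o (p0 o) (p1 o)) (comp o (p1 o) (p1 o))))
        (Dn (S (S n)) f) = Dn (S (S n)) f.

Definition DHom (A B : Ob) : Type := { f : preD A B | isDseq f }.

End PreD.

(* A pre-D-sequence f is a D-sequence iff each iterated derivative g = D^n[f]
   satisfies <1,0>.D[g] = 0, additivity of D[g] in its second argument,
   l.D^2[g] = D[g] and c.D^2[g] = D^2[g].  Since D^(n+1)[f] is D^n[D[f]] up to
   transport, any class of pre-D-sequences that is closed under D and whose members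
   satisfy these axioms consists of D-sequences, and closure properties are proved
   by exhibiting such a class.  Zero, sums, pairings, identities, projections and
   precomposition by additive maps visibly preserve the axioms.  For composition,
   the chain rule D[f*g] = T(f)*D[g] does the work: along each structural map
   occurring in the axioms, T(f) (resp. T(T(f))) becomes a postcomposition with the
   same structural map at the codomain, so the axioms for f*g reduce to those for g;
   and T(f) = <pi0.f, D[f]> is again a D-sequence.  The category, product and
   additive laws already hold for pre-D-sequences. *)

From Stdlib Require Import Setoid FunctionalExtensionality ProofIrrelevance.

Section Dsequences.
Context {Ob : Type} {Hom : Ob -> Ob -> Type} {top : Ob}
  {prod : Ob -> Ob -> Ob} (o : CLACops Hom top prod) (HX : CLAClaws o).

Local Notation "f ;; g" := (comp o f g) (at level 40, left associativity).
Local Notation PD A B := (@preD Ob Hom prod A B).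

Lemma compA {A B C D} (f : Hom A B) (g : Hom B C) (h : Hom C D) :
  f ;; g ;; h = f ;; (g ;; h).
Proof. apply (law_assoc HX). Qed.
Lemma id_comp {A B} (f : Hom A B) : idm o A ;; f = f.
Proof. apply (law_id_l HX). Qed.
Lemma comp_id {A B} (f : Hom A B) : f ;; idm o B = f.
Proof. apply (law_id_r HX). Qed.
Lemma pair_p0 {C A B} (f : Hom C A) (g : Hom C B) : pair o f g ;; p0 o = f.
Proof. apply (law_pair_p0 HX). Qed.
Lemma pair_p1 {C A B} (f : Hom C A) (g : Hom C B) : pair o f g ;; p1 o = g.
Proof. apply (law_pair_p1 HX). Qed.
Lemma comp_zero {A B C} (f : Hom A B) : f ;; zero o = (zero o : Hom A C).
Proof. apply (law_left_zero HX). Qed.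
Lemma comp_plus {A B C} (f : Hom A B) (g h : Hom B C) :
  f ;; plus o g h = plus o (f ;; g) (f ;; h).
Proof. apply (law_left_add HX). Qed.
Lemma zero_p0 {C A B} : (zero o : Hom C (prod A B)) ;; p0 o = zero o.
Proof. apply (law_p0_zero HX). Qed.
Lemma zero_p1 {C A B} : (zero o : Hom C (prod A B)) ;; p1 o = zero o.
Proof. apply (law_p1_zero HX). Qed.
Lemma plus_p0 {C A B} (f g : Hom C (prod A B)) :
  plus o f g ;; p0 o = plus o (f ;; p0 o) (g ;; p0 o).
Proof. apply (law_p0_add HX). Qed.
Lemma plus_p1 {C A B} (f g : Hom C (prod A B)) :
  plus o f g ;; p1 o = plus o (f ;; p1 o) (g ;; p1 o).
Proof. apply (law_p1_add HX). Qed.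
Lemma plusA {A B} (f g h : Hom A B) : plus o (plus o f g) h = plus o f (plus o g h).
Proof. apply (law_plus_assoc HX). Qed.
Lemma plusC {A B} (f g : Hom A B) : plus o f g = plus o g f.
Proof. apply (law_plus_comm HX). Qed.
Lemma plus0 {A B} (f : Hom A B) : plus o f (zero o) = f.
Proof. apply (law_plus_zero HX). Qed.
Lemma plusACA {A B} (a b c d : Hom A B) :
  plus o (plus o a b) (plus o c d) = plus o (plus o a c) (plus o b d).
Proof. rewrite !plusA. f_equal. rewrite <- !plusA. f_equal. apply plusC. Qed.

Lemma pair_ext {C A B} (f g : Hom C (prod A B)) :
  f ;; p0 o = g ;; p0 o -> f ;; p1 o = g ;; p1 o -> f = g.
Proof.
  intros E0 E1. rewrite (law_pair_uniq HX f), (law_pair_uniq HX g), E0, E1.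
  reflexivity.
Qed.
Lemma pair_eta {C A B} (f : Hom C (prod A B)) : pair o (f ;; p0 o) (f ;; p1 o) = f.
Proof. symmetry; apply (law_pair_uniq HX). Qed.
Lemma comp_pair {D C A B} (h : Hom D C) (f : Hom C A) (g : Hom C B) :
  h ;; pair o f g = pair o (h ;; f) (h ;; g).
Proof. apply pair_ext; rewrite ?compA, ?pair_p0, ?pair_p1; reflexivity. Qed.
Lemma pair_proj {A B} : pair o (p0 o) (p1 o) = idm o (prod A B).
Proof. apply pair_ext; rewrite ?pair_p0, ?pair_p1, ?id_comp; reflexivity. Qed.
Lemma pair_zero {C A B} : pair o (zero o) (zero o) = (zero o : Hom C (prod A B)).
Proof. apply pair_ext; rewrite ?pair_p0, ?pair_p1, ?zero_p0, ?zero_p1; reflexivity. Qed.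
Lemma pair_plus {C A B} (a b : Hom C A) (c d : Hom C B) :
  pair o (plus o a b) (plus o c d) = plus o (pair o a c) (pair o b d).
Proof. apply pair_ext; rewrite ?plus_p0, ?plus_p1, ?pair_p0, ?pair_p1; reflexivity. Qed.


Ltac cart_simpl := unfold Ph, tensor, PO;
  repeat progress rewrite ?id_comp, ?comp_id, <- ?compA, ?comp_pair, ?pair_p0,
    ?pair_p1, ?comp_zero, ?zero_p0, ?zero_p1, ?plus_p0, ?plus_p1, ?comp_plus,
    ?pair_proj, ?pair_eta.

Lemma tensor_p0 {A B C D} (h : Hom A B) (k : Hom C D) :
  tensor o h k ;; p0 o = p0 o ;; h.
Proof. cart_simpl; reflexivity. Qed.
Lemma pair_tensor {X A B C D} (a : Hom X A) (b : Hom X B) (g : Hom A C) (g' : Hom B D) :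
  pair o a b ;; tensor o g g' = pair o (a ;; g) (b ;; g').
Proof. cart_simpl; reflexivity. Qed.

Definition additive {A B} (k : Hom A B) : Prop :=
  (forall X, (zero o : Hom X A) ;; k = zero o) /\
  (forall X (a b : Hom X A), plus o a b ;; k = plus o (a ;; k) (b ;; k)).

Lemma additive_id A : additive (idm o A).
Proof. split; intros; rewrite ?comp_id; reflexivity. Qed.
Lemma additive_p0 A B : additive (p0 o : Hom (prod A B) A).
Proof. split; intros; [apply zero_p0 | apply plus_p0]. Qed.
Lemma additive_p1 A B : additive (p1 o : Hom (prod A B) B).
Proof. split; intros; [apply zero_p1 | apply plus_p1]. Qed.
Lemma additive_comp {A B C} (h : Hom A B) (k : Hom B C) :
  additive h -> additive k -> additive (h ;; k).
Proof.
  intros [h0 hD] [k0 kD]; split; intros;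
    rewrite <- compA, ?h0, ?k0, ?hD, ?kD, ?compA; reflexivity.
Qed.
Lemma additive_pair {C A B} (h : Hom C A) (k : Hom C B) :
  additive h -> additive k -> additive (pair o h k).
Proof.
  intros [h0 hD] [k0 kD]; split; intros; rewrite comp_pair, ?h0, ?k0, ?hD, ?kD.
  - apply pair_zero.
  - rewrite !(comp_pair _ h k). apply pair_plus.
Qed.
Lemma additive_Ph {A B} (h : Hom A B) : additive h -> additive (Ph o h).
Proof.
  intros Hh. unfold Ph, tensor. apply additive_pair; apply additive_comp;
    first [exact Hh | apply additive_p0 | apply additive_p1].
Qed.

Lemma Ph_comp {A B C} (h : Hom A B) (k : Hom B C) : Ph o (h ;; k) = Ph o h ;; Ph o k.
Proof. unfold Ph, PO; apply pair_ext; cart_simpl; reflexivity. Qed.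
Lemma Ph_id A : Ph o (idm o A) = idm o (PO A).
Proof. unfold Ph, PO; apply pair_ext; cart_simpl; reflexivity. Qed.
Lemma Ph_p1 {A B} (h : Hom A B) : Ph o h ;; p1 o = p1 o ;; h.
Proof. cart_simpl; reflexivity. Qed.
Lemma Pnh_comp n : forall {A B C} (h : Hom A B) (k : Hom B C),
  Pnh o n (h ;; k) = Pnh o n h ;; Pnh o n k.
Proof. induction n; intros; simpl; [reflexivity |]. rewrite Ph_comp; apply IHn. Qed.
Lemma Pnh_id n : forall A, Pnh o n (idm o A) = idm o (Pn n A).
Proof. induction n; intros; simpl; [reflexivity |]. rewrite Ph_id; apply IHn. Qed.
Ltac seq_simpl := cart_simpl; repeat progress (rewrite ?Pnh_id, <- ?Pnh_comp; cart_simpl).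

Lemma iseq_natural n : forall {A B} (h : Hom A B),
  Pnh o n h ;; iseq o n B = iseq o n A ;; h.
Proof.
  induction n; intros; simpl.
  - rewrite id_comp, comp_id; reflexivity.
  - rewrite <- compA, IHn, !compA, Ph_p1. reflexivity.
Qed.

Definition postcomp {A B C} (F : PD A B) (g : Hom B C) : PD A C :=
  fun n => F n ;; g.

Lemma act_comp {A'' A' A B} (h : Hom A'' A') (k : Hom A' A) (F : PD A B) :
  act o h (act o k F) = act o (h ;; k) F.
Proof. extensionality n; unfold act; rewrite Pnh_comp, compA; reflexivity. Qed.
Lemma act_pairseq {A' C A B} (h : Hom A' C) (F : PD C A) (G : PD C B) :
  act o h (pairseq o F G) = pairseq o (act o h F) (act o h G).
Proof. extensionality n; apply comp_pair. Qed.
Lemma act_plusseq {A' A B} (h : Hom A' A) (F G : PD A B) :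
  act o h (plusseq o F G) = plusseq o (act o h F) (act o h G).
Proof. extensionality n; apply comp_plus. Qed.
Lemma act_zeroseq {A' A B} (h : Hom A' A) : act o h (zeroseq o : PD A B) = zeroseq o.
Proof. extensionality n; apply comp_zero. Qed.
Lemma act_postcomp_idseq {A' A B} (h : Hom A' A) (g : Hom A B) :
  act o h (postcomp (idseq o A) g) = postcomp (idseq o A') (h ;; g).
Proof.
  extensionality n. unfold act, postcomp, idseq. rewrite <- compA, iseq_natural, compA.
  reflexivity.
Qed.

Lemma Dseq_dcomp {A B C} (F : PD A B) (G : PD B C) :
  Dseq (dcomp o F G) = dcomp o (Tseq o F) (Dseq G).
Proof. reflexivity. Qed.
Lemma Dseq_act {A' A B} (h : Hom A' A) (F : PD A B) :
  Dseq (act o h F) = act o (Ph o h) (Dseq F).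
Proof. reflexivity. Qed.
Lemma Dseq_zeroseq {A B} : Dseq (zeroseq o : PD A B) = zeroseq o.
Proof. reflexivity. Qed.
Lemma Dseq_plusseq {A B} (F G : PD A B) :
  Dseq (plusseq o F G) = plusseq o (Dseq F) (Dseq G).
Proof. reflexivity. Qed.
Lemma Dseq_pairseq {C A B} (F : PD C A) (G : PD C B) :
  Dseq (pairseq o F G) = pairseq o (Dseq F) (Dseq G).
Proof. reflexivity. Qed.
Lemma Dseq_postcomp_idseq {A B} (g : Hom A B) :
  Dseq (postcomp (idseq o A) g) = postcomp (idseq o (PO A)) (p1 o ;; g).
Proof. extensionality n. apply compA. Qed.
Lemma Tseq_pairseq {A B} (F : PD A B) :
  Tseq o F = pairseq o (act o (p0 o) F) (Dseq F).
Proof. reflexivity. Qed.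

Lemma Tseq_act {A' A B} (h : Hom A' A) (F : PD A B) :
  Tseq o (act o h F) = act o (Ph o h) (Tseq o F).
Proof.
  extensionality n; unfold Tseq, act. etransitivity; [| symmetry; apply comp_pair]. f_equal.
  unfold Ph, PO. rewrite <- !compA, <- !Pnh_comp, tensor_p0. reflexivity.
Qed.
Lemma Tn_act n : forall {A' A B} (h : Hom A' A) (F : PD A B),
  Tn o n (act o h F) = act o (Pnh o n h) (Tn o n F).
Proof. induction n; intros; simpl; [reflexivity |]. rewrite Tseq_act; apply IHn. Qed.
Lemma act_dcomp {A' A B C} (h : Hom A' A) (F : PD A B) (G : PD B C) :
  act o h (dcomp o F G) = dcomp o (act o h F) G.
Proof. extensionality n; unfold dcomp. rewrite Tn_act. symmetry; apply compA. Qed.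

Lemma Tseq_postcomp {A B C} (F : PD A B) (g : Hom B C) :
  Tseq o (postcomp F g) = postcomp (Tseq o F) (Ph o g).
Proof.
  extensionality n; unfold Tseq, postcomp, Ph, PO. rewrite pair_tensor, !compA.
  reflexivity.
Qed.
Lemma Tn_postcomp n : forall {A B C} (F : PD A B) (g : Hom B C),
  Tn o n (postcomp F g) = postcomp (Tn o n F) (Pnh o n g).
Proof. induction n; intros; simpl; [reflexivity |]. rewrite Tseq_postcomp; apply IHn. Qed.
Lemma dcomp_postcomp {A B B' C} (F : PD A B) (g : Hom B B') (G : PD B' C) :
  dcomp o (postcomp F g) G = dcomp o F (act o g G).
Proof. extensionality n; unfold dcomp. rewrite Tn_postcomp. apply compA. Qed.
Lemma dcomp_zeroseq {A B C} (F : PD A B) : dcomp o F (zeroseq o : PD B C) = zeroseq o.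
Proof. extensionality n; apply comp_zero. Qed.
Lemma dcomp_plusseq {A B C} (F : PD A B) (G H : PD B C) :
  dcomp o F (plusseq o G H) = plusseq o (dcomp o F G) (dcomp o F H).
Proof. extensionality n; apply comp_plus. Qed.

Definition natural {A' A B' B} (F : PD A B) (G : PD A' B') (h : Hom A' A)
    (g : Hom B' B) : Prop :=
  forall n, Pnh o n h ;; F n = G n ;; g.

Lemma natural_Tseq {A' A B' B} (F : PD A B) (G : PD A' B') h g :
  natural F G h g -> natural (Tseq o F) (Tseq o G) (Ph o h) (Ph o g).
Proof.
  intros H n. unfold Tseq, Ph, PO. rewrite comp_pair, pair_tensor. f_equal.
  - rewrite <- compA, <- Pnh_comp, tensor_p0, Pnh_comp, compA, H, <- compA.
    reflexivity.
  - apply (H (S n)).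
Qed.
Lemma natural_Tn n : forall {A' A B' B} (F : PD A B) (G : PD A' B') h g,
  natural F G h g -> natural (Tn o n F) (Tn o n G) (Pnh o n h) (Pnh o n g).
Proof. induction n; intros; simpl; [assumption |]. apply IHn, natural_Tseq, H. Qed.

Lemma Tseq_dcomp {A B C} (F : PD A B) (G : PD B C) :
  Tseq o (dcomp o F G) = dcomp o (Tseq o F) (Tseq o G).
Proof.
  extensionality n; unfold dcomp, Tseq at 1 3. unfold PO. rewrite comp_pair. f_equal.
  assert (E := natural_Tn n F (Tseq o F) (p0 o) (p0 o) (fun k => eq_sym (pair_p0 _ _))).
  specialize (E 0). simpl in E. unfold PO in *. rewrite <- compA, E, compA. reflexivity.
Qed.
Lemma Tn_dcomp n : forall {A B C} (F : PD A B) (G : PD B C),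
  Tn o n (dcomp o F G) = dcomp o (Tn o n F) (Tn o n G).
Proof. induction n; intros; simpl; [reflexivity |]. rewrite Tseq_dcomp; apply IHn. Qed.
Lemma Tn_iseq n : forall {A B} (F : PD A B), Tn o n F 0 ;; iseq o n B = F n.
Proof.
  induction n; intros; simpl.
  - apply comp_id.
  - rewrite <- compA. assert (E := IHn _ _ (Tseq o F)). simpl in E. unfold PO in *.
    rewrite E. apply pair_p1.
Qed.
Lemma Tseq_idseq A : Tseq o (idseq o A) = idseq o (PO A).
Proof.
  extensionality n; unfold Tseq, idseq. rewrite iseq_natural. simpl. rewrite <- comp_pair.
  unfold PO. rewrite pair_proj, comp_id. reflexivity.
Qed.
Lemma Tn_idseq n : forall A, Tn o n (idseq o A) = idseq o (Pn n A).
Proof. induction n; intros; simpl; [reflexivity |]. rewrite Tseq_idseq; apply IHn. Qed.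

Lemma dcomp_id_l {A B} (F : PD A B) : dcomp o (idseq o A) F = F.
Proof. extensionality n. unfold dcomp. rewrite Tn_idseq. apply id_comp. Qed.
Lemma dcomp_id_r {A B} (F : PD A B) : dcomp o F (idseq o B) = F.
Proof. extensionality n. apply Tn_iseq. Qed.
Lemma dcomp_assoc {A B C D} (F : PD A B) (G : PD B C) (H : PD C D) :
  dcomp o (dcomp o F G) H = dcomp o F (dcomp o G H).
Proof. extensionality n. unfold dcomp at 1 3 4. rewrite Tn_dcomp. apply compA. Qed.
Lemma dcomp_postcomp_idseq {A B C} (F : PD A B) (g : Hom B C) :
  dcomp o F (postcomp (idseq o B) g) = postcomp F g.
Proof. extensionality n. unfold dcomp, postcomp, idseq. rewrite <- compA, Tn_iseq. reflexivity. Qed.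

Local Notation inj0 C := (pair o (idm o C) (zero o) : Hom C (prod C C)).
Local Notation inj1 C := (pair o (zero o) (idm o C) : Hom C (prod C C)).
Local Notation add_r C :=
  (tensor o (idm o C) (plus o (p0 o) (p1 o)) : Hom (prod C (prod C C)) (prod C C)).
Local Notation proj_r0 C :=
  (tensor o (idm o C) (p0 o) : Hom (prod C (prod C C)) (prod C C)).
Local Notation proj_r1 C :=
  (tensor o (idm o C) (p1 o) : Hom (prod C (prod C C)) (prod C C)).
Local Notation ell C :=
  (tensor o (inj0 C) (inj1 C) : Hom (prod C C) (prod (prod C C) (prod C C))).
Local Notation cswap C :=
  (pair o (pair o (p0 o ;; p0 o) (p1 o ;; p0 o)) (pair o (p0 o ;; p1 o) (p1 o ;; p1 o))
    : Hom (prod (prod C C) (prod C C)) (prod (prod C C) (prod C C))).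

Record D_axioms {C B} (F : PD C B) : Prop := {
  Dax_zero : act o (inj0 C) (Dseq F) = zeroseq o;
  Dax_add : act o (add_r C) (Dseq F)
            = plusseq o (act o (proj_r0 C) (Dseq F)) (act o (proj_r1 C) (Dseq F));
  Dax_lift : act o (ell C) (Dseq (Dseq F)) = Dseq F;
  Dax_swap : act o (cswap C) (Dseq (Dseq F)) = Dseq (Dseq F) }.

Lemma isDseq_axioms {A B} (F : PD A B) : isDseq o F <-> forall n, D_axioms (Dn n F).
Proof.
  split; intros H n.
  - destruct (H n) as (H1 & H2 & H3 & H4). constructor; assumption.
  - destruct (H n) as [H1 H2 H3 H4]. repeat split; assumption.
Qed.

Lemma Dseq_transport {X Y B} (e : X = Y) (F : PD X B) :
  Dseq (eq_rect X (fun Z => PD Z B) F Y e)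
  = eq_rect (PO X) (fun Z => PD Z B) (Dseq F) (PO Y) (f_equal PO e).
Proof. destruct e; reflexivity. Qed.
Lemma D_axioms_transport {X Y B} (e : X = Y) (F : PD X B) :
  D_axioms (eq_rect X (fun Z => PD Z B) F Y e) <-> D_axioms F.
Proof. destruct e; tauto. Qed.

(* [PnO m (PO A)] and [PO (PnO m A)] are equal objects but not convertible ones. *)
Lemma Dn_S_transport m : forall {A B} (F : PD A B),
  exists e : PnO m (PO A) = PO (PnO m A),
    Dn (S m) F = eq_rect _ (fun X => PD X B) (Dn m (Dseq F)) _ e.
Proof.
  induction m; intros A B F.
  - exists eq_refl. reflexivity.
  - destruct (IHm A B F) as [e E]. exists (f_equal PO e).
    change (Dseq (Dn (S m) F) = eq_rect _ (fun X => PD X B) (Dseq (Dn m (Dseq F))) _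
      (f_equal PO e)).
    rewrite E. apply Dseq_transport.
Qed.

Lemma isDseq_D_axioms {A B} (F : PD A B) : isDseq o F -> D_axioms F.
Proof. intros H. exact (proj1 (isDseq_axioms F) H 0). Qed.

Lemma isDseq_Dseq {A B} (F : PD A B) : isDseq o F -> isDseq o (Dseq F).
Proof.
  rewrite !isDseq_axioms. intros H n. destruct (Dn_S_transport n F) as [e E].
  apply (D_axioms_transport e). rewrite <- E. apply (H (S n)).
Qed.

Lemma isDseq_coind {B} (P : forall A, PD A B -> Prop) :
  (forall A (F : PD A B), P A F -> D_axioms F) ->
  (forall A (F : PD A B), P A F -> P (PO A) (Dseq F)) ->
  forall A (F : PD A B), P A F -> isDseq o F.
Proof.
  intros Hax HD A F HF. apply isDseq_axioms. intro n. revert A F HF.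
  induction n; intros A F HF.
  - exact (Hax A F HF).
  - destruct (Dn_S_transport n F) as [e E]. rewrite E.
    apply D_axioms_transport, IHn, HD, HF.
Qed.

Lemma D_axioms_zeroseq {C B} : D_axioms (zeroseq o : PD C B).
Proof.
  constructor; rewrite ?Dseq_zeroseq, ?act_zeroseq; try reflexivity.
  extensionality n. symmetry; apply plus0.
Qed.

Lemma D_axioms_plusseq {C B} (F G : PD C B) :
  D_axioms F -> D_axioms G -> D_axioms (plusseq o F G).
Proof.
  intros [F1 F2 F3 F4] [G1 G2 G3 G4].
  constructor; rewrite ?Dseq_plusseq, ?act_plusseq, ?F1, ?F2, ?F3, ?F4, ?G1, ?G2, ?G3, ?G4;
    try reflexivity.
  - extensionality n. apply plus0.
  - extensionality n. apply plusACA.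
Qed.

Lemma D_axioms_pairseq {C A B} (F : PD C A) (G : PD C B) :
  D_axioms F -> D_axioms G -> D_axioms (pairseq o F G).
Proof.
  intros [F1 F2 F3 F4] [G1 G2 G3 G4].
  constructor; rewrite ?Dseq_pairseq, ?act_pairseq, ?F1, ?F2, ?F3, ?F4, ?G1, ?G2, ?G3, ?G4;
    try reflexivity.
  - extensionality n. apply pair_zero.
  - extensionality n. apply pair_plus.
Qed.

Lemma D_axioms_act {C' C B} (k : Hom C' C) (F : PD C B) :
  additive k -> D_axioms F -> D_axioms (act o k F).
Proof.
  intros [k0 kD] [F1 F2 F3 F4].
  assert (E1 : inj0 C' ;; Ph o k = k ;; inj0 C).
  { unfold Ph, PO. apply pair_ext; cart_simpl; rewrite ?k0; reflexivity. }
  assert (E2 : add_r C' ;; Ph o k = tensor o k (Ph o k) ;; add_r C).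
  { unfold Ph, PO. apply pair_ext; cart_simpl; rewrite ?kD; cart_simpl; reflexivity. }
  assert (E3 : proj_r0 C' ;; Ph o k = tensor o k (Ph o k) ;; proj_r0 C).
  { unfold Ph, PO. apply pair_ext; cart_simpl; reflexivity. }
  assert (E4 : proj_r1 C' ;; Ph o k = tensor o k (Ph o k) ;; proj_r1 C).
  { unfold Ph, PO. apply pair_ext; cart_simpl; reflexivity. }
  assert (E5 : ell C' ;; Ph o (Ph o k) = Ph o k ;; ell C).
  { unfold Ph, PO. apply pair_ext; apply pair_ext; cart_simpl; rewrite ?k0; reflexivity. }
  assert (E6 : cswap C' ;; Ph o (Ph o k) = Ph o (Ph o k) ;; cswap C).
  { unfold Ph, PO. apply pair_ext; apply pair_ext; cart_simpl; reflexivity. }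
  constructor; rewrite !Dseq_act, !act_comp; unfold PO in *;
    rewrite ?E1, ?E2, ?E3, ?E4, ?E5, ?E6, <- !act_comp, ?F1, ?F2, ?F3, ?F4,
      ?act_zeroseq, ?act_plusseq; reflexivity.
Qed.

Lemma D_axioms_postcomp_idseq {A B} (g : Hom A B) :
  additive g -> D_axioms (postcomp (idseq o A) g).
Proof.
  intros [g0 gD].
  constructor; rewrite !Dseq_postcomp_idseq, !act_postcomp_idseq; extensionality n;
    unfold postcomp, plusseq, zeroseq; cart_simpl; rewrite ?g0, ?gD; cart_simpl; reflexivity.
Qed.

Lemma act_inj0_Tseq {C E} (F : PD C E) :
  D_axioms F -> act o (inj0 C) (Tseq o F) = postcomp F (inj0 E).
Proof.
  intros [F1 _ _ _]. rewrite Tseq_pairseq. unfold PO in *.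
  rewrite act_pairseq, act_comp, F1.
  extensionality n. unfold pairseq, act, postcomp, zeroseq. unfold PO in *. seq_simpl. reflexivity.
Qed.

Lemma act_add_r_Tseq {C E} (F : PD C E) :
  D_axioms F -> exists W : PD (prod C (prod C C)) (prod E (prod E E)),
    act o (add_r C) (Tseq o F) = postcomp W (add_r E)
    /\ act o (proj_r0 C) (Tseq o F) = postcomp W (proj_r0 E)
    /\ act o (proj_r1 C) (Tseq o F) = postcomp W (proj_r1 E).
Proof.
  intros [_ F2 _ _].
  exists (pairseq o (act o (p0 o) F)
            (pairseq o (act o (proj_r0 C) (Dseq F)) (act o (proj_r1 C) (Dseq F)))).
  rewrite Tseq_pairseq. unfold PO in *. rewrite !act_pairseq, !act_comp, F2.
  repeat split; extensionality n; unfold pairseq, act, postcomp, plusseq; unfold PO in *;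
    seq_simpl; reflexivity.
Qed.

Lemma act_ell_Tseq2 {C E} (F : PD C E) :
  D_axioms F -> act o (ell C) (Tseq o (Tseq o F)) = postcomp (Tseq o F) (ell E).
Proof.
  intros [F1 _ F3 _].
  assert (L0 : ell C ;; p0 o = p0 o ;; inj0 C) by (cart_simpl; reflexivity).
  assert (LP0 : ell C ;; Ph o (p0 o) = p0 o ;; inj0 C).
  { unfold Ph, PO; apply pair_ext; cart_simpl; reflexivity. }
  rewrite (Tseq_pairseq (Tseq o F)), !Tseq_pairseq. unfold PO in *.
  rewrite Dseq_pairseq. unfold PO in *. rewrite Dseq_act. unfold PO in *.
  rewrite !act_pairseq, !act_comp, F3. unfold PO in *.
  rewrite L0, LP0, <- !act_comp, F1, !act_zeroseq.
  extensionality n. unfold pairseq, act, postcomp, zeroseq. seq_simpl. reflexivity.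
Qed.

Lemma act_cswap_Tseq2 {C E} (F : PD C E) :
  D_axioms F -> act o (cswap C) (Tseq o (Tseq o F)) = postcomp (Tseq o (Tseq o F)) (cswap E).
Proof.
  intros [_ _ _ F4].
  rewrite (Tseq_pairseq (Tseq o F)), !Tseq_pairseq. unfold PO in *.
  rewrite Dseq_pairseq. unfold PO in *. rewrite Dseq_act. unfold PO in *.
  rewrite !act_pairseq, !act_comp, F4.
  extensionality n. unfold pairseq, act, postcomp. unfold PO in *. seq_simpl. reflexivity.
Qed.

Lemma D_axioms_dcomp {C E Z} (F : PD C E) (G : PD E Z) :
  D_axioms F -> D_axioms G -> D_axioms (dcomp o F G).
Proof.
  intros HF [G1 G2 G3 G4].
  pose proof (act_inj0_Tseq F HF) as K.
  destruct (act_add_r_Tseq F HF) as (W & KA & KA0 & KA1).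
  pose proof (act_ell_Tseq2 F HF) as KL.
  pose proof (act_cswap_Tseq2 F HF) as KC.
  constructor; rewrite !Dseq_dcomp, !act_dcomp; unfold PO in *.
  - rewrite K, dcomp_postcomp, G1. apply dcomp_zeroseq.
  - rewrite KA, dcomp_postcomp, G2, dcomp_plusseq, KA0, KA1, !dcomp_postcomp.
    reflexivity.
  - rewrite KL, dcomp_postcomp, G3. reflexivity.
  - rewrite KC, dcomp_postcomp, G4. reflexivity.
Qed.

Lemma isDseq_pairseq {C A B} (F : PD C A) (G : PD C B) :
  isDseq o F -> isDseq o G -> isDseq o (pairseq o F G).
Proof.
  intros HF HG.
  apply (isDseq_coind (fun X H => exists (F' : PD X A) (G' : PD X B),
                         isDseq o F' /\ isDseq o G' /\ H = pairseq o F' G')).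
  - intros X H (F' & G' & HF' & HG' & ->).
    apply D_axioms_pairseq; apply isDseq_D_axioms; assumption.
  - intros X H (F' & G' & HF' & HG' & ->).
    exists (Dseq F'), (Dseq G'). auto using isDseq_Dseq.
  - eauto.
Qed.

Lemma isDseq_zeroseq {A B} : isDseq o (zeroseq o : PD A B).
Proof.
  apply (isDseq_coind (fun X H => H = zeroseq o)); [intros X H -> .. | reflexivity].
  - apply D_axioms_zeroseq.
  - apply Dseq_zeroseq.
Qed.

Lemma isDseq_plusseq {A B} (F G : PD A B) :
  isDseq o F -> isDseq o G -> isDseq o (plusseq o F G).
Proof.
  intros HF HG.
  apply (isDseq_coind (fun X H => exists F' G' : PD X B,
                         isDseq o F' /\ isDseq o G' /\ H = plusseq o F' G'));
    [intros X H (F' & G' & HF' & HG' & ->) .. | eauto].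
  - apply D_axioms_plusseq; apply isDseq_D_axioms; assumption.
  - exists (Dseq F'), (Dseq G'). auto using isDseq_Dseq.
Qed.

Lemma isDseq_act {A' A B} (k : Hom A' A) (F : PD A B) :
  additive k -> isDseq o F -> isDseq o (act o k F).
Proof.
  intros Hk HF.
  apply (isDseq_coind (fun X H => exists Y (k' : Hom X Y) (F' : PD Y B),
                         additive k' /\ isDseq o F' /\ H = act o k' F'));
    [intros X H (Y & k' & F' & Hk' & HF' & ->) .. | eauto 6].
  - apply D_axioms_act; [| apply isDseq_D_axioms]; assumption.
  - exists (PO Y), (Ph o k'), (Dseq F').
    auto using additive_Ph, isDseq_Dseq.
Qed.

Lemma isDseq_Tseq {A B} (F : PD A B) : isDseq o F -> isDseq o (Tseq o F).
Proof.
  intros HF. rewrite Tseq_pairseq.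
  apply isDseq_pairseq; [apply isDseq_act, HF; apply additive_p0 | apply isDseq_Dseq, HF].
Qed.

Lemma isDseq_dcomp {A B C} (F : PD A B) (G : PD B C) :
  isDseq o F -> isDseq o G -> isDseq o (dcomp o F G).
Proof.
  intros HF HG.
  apply (isDseq_coind (fun X H => exists Y (F' : PD X Y) (G' : PD Y C),
                         isDseq o F' /\ isDseq o G' /\ H = dcomp o F' G'));
    [intros X H (Y & F' & G' & HF' & HG' & ->) .. | eauto 6].
  - apply D_axioms_dcomp; apply isDseq_D_axioms; assumption.
  - exists (PO Y), (Tseq o F'), (Dseq G').
    auto using isDseq_Tseq, isDseq_Dseq.
Qed.

Lemma isDseq_postcomp_idseq {A B} (g : Hom A B) :
  additive g -> isDseq o (postcomp (idseq o A) g).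
Proof.
  intros Hg.
  apply (isDseq_coind (fun X H => exists g' : Hom X B,
                         additive g' /\ H = postcomp (idseq o X) g'));
    [intros X H (g' & Hg' & ->) .. | eauto].
  - apply D_axioms_postcomp_idseq, Hg'.
  - exists (p1 o ;; g'). split; [apply additive_comp, Hg'; apply additive_p1 |].
    apply Dseq_postcomp_idseq.
Qed.

Lemma idseq_postcomp A : idseq o A = postcomp (idseq o A) (idm o A).
Proof. extensionality n. symmetry; apply comp_id. Qed.
Lemma proj0seq_postcomp A B : proj0seq o A B = postcomp (idseq o (prod A B)) (p0 o).
Proof. reflexivity. Qed.
Lemma proj1seq_postcomp A B : proj1seq o A B = postcomp (idseq o (prod A B)) (p1 o).
Proof. reflexivity. Qed.

Lemma isDseq_idseq A : isDseq o (idseq o A).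
Proof. rewrite idseq_postcomp. apply isDseq_postcomp_idseq, additive_id. Qed.
Lemma isDseq_proj0seq A B : isDseq o (proj0seq o A B).
Proof. apply isDseq_postcomp_idseq, additive_p0. Qed.
Lemma isDseq_proj1seq A B : isDseq o (proj1seq o A B).
Proof. apply isDseq_postcomp_idseq, additive_p1. Qed.

Definition Dops : CLACops (DHom o) top prod := {|
  idm := fun A => exist _ (idseq o A) (isDseq_idseq A);
  comp := fun A B C f g => exist _ (dcomp o (proj1_sig f) (proj1_sig g))
            (isDseq_dcomp _ _ (proj2_sig f) (proj2_sig g));
  p0 := fun A B => exist _ (proj0seq o A B) (isDseq_proj0seq A B);
  p1 := fun A B => exist _ (proj1seq o A B) (isDseq_proj1seq A B);
  pair := fun C A B f g => exist _ (pairseq o (proj1_sig f) (proj1_sig g))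
            (isDseq_pairseq _ _ (proj2_sig f) (proj2_sig g));
  zero := fun A B => exist _ (zeroseq o) isDseq_zeroseq;
  plus := fun A B f g => exist _ (plusseq o (proj1_sig f) (proj1_sig g))
            (isDseq_plusseq _ _ (proj2_sig f) (proj2_sig g)) |}.

Lemma DHom_ext {A B} (f g : DHom o A B) : proj1_sig f = proj1_sig g -> f = g.
Proof.
  destruct f as [f Hf], g as [g Hg]; simpl; intros E; subst g.
  f_equal. apply proof_irrelevance.
Qed.

Lemma Dops_laws : CLAClaws Dops.
Proof.
  constructor; intros; try apply DHom_ext; simpl;
    rewrite ?proj0seq_postcomp, ?proj1seq_postcomp, ?dcomp_postcomp_idseq.
  - apply dcomp_id_l.
  - apply dcomp_id_r.
  - apply dcomp_assoc.
  - constructor. exact (zero Dops).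
  - extensionality n. apply (law_top_uniq HX).
  - extensionality n. apply pair_p0.
  - extensionality n. apply pair_p1.
  - extensionality n. symmetry; apply pair_eta.
  - extensionality n. apply plusA.
  - extensionality n. apply plusC.
  - extensionality n. apply plus0.
  - apply dcomp_plusseq.
  - apply dcomp_zeroseq.
  - extensionality n. apply plus_p0.
  - extensionality n. apply zero_p0.
  - extensionality n. apply plus_p1.
  - extensionality n. apply zero_p1.
Qed.

End Dsequences.

Theorem proposition4p7 (Ob : Type) (Hom : Ob -> Ob -> Type) (top : Ob)
    (prod : Ob -> Ob -> Ob) (o : CLACops Hom top prod) (HX : CLAClaws o) :
  exists o' : CLACops (DHom o) top prod,
    CLAClaws o'
    /\ (forall A, proj1_sig (idm o' A) = idseq o A)
    /\ (forall A B C (f : DHom o A B) (g : DHom o B C),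
          proj1_sig (comp o' f g) = dcomp o (proj1_sig f) (proj1_sig g))
    /\ (forall A B, proj1_sig (p0 o' : DHom o (prod A B) A) = proj0seq o A B)
    /\ (forall A B, proj1_sig (p1 o' : DHom o (prod A B) B) = proj1seq o A B)
    /\ (forall C A B (f : DHom o C A) (g : DHom o C B),
          proj1_sig (pair o' f g) = pairseq o (proj1_sig f) (proj1_sig g))
    /\ (forall A B, proj1_sig (zero o' : DHom o A B) = zeroseq o)
    /\ (forall A B (f g : DHom o A B),
          proj1_sig (plus o' f g) = plusseq o (proj1_sig f) (proj1_sig g)).
Proof.
  exists (Dops o HX). split; [exact (Dops_laws o HX) |].
  repeat split; reflexivity.
Qed.
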